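(* Let $G=(V,E)$ be a simple graph with $n$ vertices. Then, as polynomials in $\lambda$, $$P(\mathcal{H}_{\bullet G},\lambda)=\lambda(\lambda-1)^n\, I\!\left(G,\tfrac{1}{\lambda-1}\right).$$
   Context: A hypergraph $\mathcal{H}=(\mathcal{V},\mathcal{E})$ consists of a finite vertex set $\mathcal{V}$ and a set $\mathcal{E}$ of subsets of $\mathcal{V}$, each of size at least $1$, called edges. For a positive integer $\lambda$, a weak proper $\lambda$-colouring of $\mathcal{H}$ is a map $\phi:\mathcal{V}\to\{1,\dots,\lambda\}$ such that $|\{\phi(v):v\in e\}|>1$ for every $e\in\mathcal{E}$. $P(\mathcal{H},\lambda)$ denotes the number of weak proper $\lambda$-colourings of $\mathcal{H}$; it is a polynomial in $\lambda$ of degree $|\mathcal{V}|$ (the chromatic polynomial of $\mathcal{H}$), and is regarded as a polynomial for all real or complex $\lambda$. For a simple graph $G=(V,E)$, $\mathcal{H}_{\bullet G}$ is the hypergraph with vertex set $V\cup\{w\}$, where $w\notin V$ is a new vertex, and edge set $\{\{u,v,w\}: uv\in E\}$. The independence polynomial of $G$ is $I(G,x)=\sum_A x^{|A|}$, the sum over all independent sets $A$ of $G$ (including the empty set). *)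

From HB Require Import structures.
From mathcomp Require Import all_boot all_order all_algebra.
Set Implicit Arguments. Unset Strict Implicit. Unset Printing Implicit Defensive.
Import Order.TTheory GRing.Theory Num.Theory.

(* A hypergraph on a finite vertex type T is given by its edge set
   E : {set {set T}}. Colours {1,...,k} are modelled by 'I_k. *)
Definition weak_proper (T : finType) (E : {set {set T}}) (k : nat)
  (phi : {ffun T -> 'I_k}) : bool :=
  [forall f in E, 1 < #|phi @: f|].

Definition nb_colourings (T : finType) (E : {set {set T}}) (k : nat) : nat :=
  #|[set phi : {ffun T -> 'I_k} | @weak_proper T E k phi]|.

(* H_{bullet G}: vertex set option V (None is the new vertex w),
   edges {u, v, w} for uv in E(G). *)
Definition bullet_edges (V : finType) (e : rel V) : {set {set option V}} :=
  [set [set Some uv.1; Some uv.2; None] | uv in [set uv : V * V | e uv.1 uv.2]].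

Definition independent (V : finType) (e : rel V) (A : {set V}) : bool :=
  [forall u in A, forall v in A, ~~ e u v].

Definition indep_poly_eval (R : nzRingType) (V : finType) (e : rel V) (x : R) : R :=
  (\sum_(A : {set V} | independent e A) x ^+ #|A|)%R.

From HB Require Import structures.
From mathcomp Require Import all_boot all_order all_algebra.
Set Implicit Arguments.
Unset Strict Implicit.
Unset Printing Implicit Defensive.
Import Order.TTheory GRing.Theory Num.Theory.

(* In a weak proper k-colouring of H_{•G}, let c be the colour of the apex w
   and A the set of vertices of G also coloured c. An edge {u, v, w} is
   monochromatic exactly when u, v are both in A, so the colouring is proper
   iff A is independent in G; and the pair (c, A) is realised by exactly
   (k-1)^(n-|A|) colourings, since the vertices outside A may take any colour
   but c. Hence P(H_{•G}, k) = k * sum_{A independent} (k-1)^(n-|A|), which is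
   the announced polynomial evaluated at k. *)

Lemma big_option (R : Type) (idx : R) (op : Monoid.com_law idx)
    (T : finType) (F : option T -> R) :
  \big[op/idx]_(o : option T) F o = op (F None) (\big[op/idx]_(t : T) F (Some t)).
Proof.
rewrite (bigD1 None) //=; congr (op _ _).
rewrite (reindex_omap Some id) => [|[t|] //].
by apply: eq_bigl => t /=; rewrite eqxx.
Qed.

Lemma imset_triple_card_gt1 (T T' : finType) (f : T -> T') (a b c : T) :
  (1 < #|f @: [set a; b; c]|) = (f a != f c) || (f b != f c).
Proof.
rewrite imsetU imsetU1 !imset_set1.
have [-> | ac] := eqVneq (f a) (f c); have [-> | bc] := eqVneq (f b) (f c).
- by rewrite !setUid cards1.
- by apply/card_gt1P; exists (f b), (f c); rewrite !inE !eqxx bc !orbT.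
- by apply/card_gt1P; exists (f a), (f c); rewrite !inE !eqxx ac !orbT.
- by apply/card_gt1P; exists (f a), (f c); rewrite !inE !eqxx ac !orbT.
Qed.

Section BulletColourings.
Variables (V : finType) (e : rel V).

Definition apex_class k (phi : {ffun option V -> 'I_k}) : {set V} :=
  [set v | phi (Some v) == phi None].

Lemma weak_proper_bulletE k (phi : {ffun option V -> 'I_k}) :
  weak_proper (bullet_edges e) phi = independent e (apex_class phi).
Proof.
apply/forall_inP/forall_inP.
- move=> proper_phi u; rewrite inE => /eqP uc; apply/forall_inP => v.
  rewrite inE => /eqP vc; apply/negP => euv.
  have edge_uv : [set Some u; Some v; None] \in bullet_edges e.
    by apply/imsetP; exists (u, v); rewrite ?inE.
  by have := proper_phi _ edge_uv; rewrite imset_triple_card_gt1 uc vc eqxx.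
- move=> indepA f /imsetP [[u v]]; rewrite inE /= => euv ->.
  rewrite imset_triple_card_gt1 -negb_and; apply/negP => /andP [uc vc].
  have uA : u \in apex_class phi by rewrite inE uc.
  have vA : v \in apex_class phi by rewrite inE vc.
  by have /forall_inP /(_ v vA) := indepA u uA; rewrite euv.
Qed.

Lemma card_apex_fibre k (c : 'I_k) (A : {set V}) :
  #|[set phi : {ffun option V -> 'I_k} | (phi None, apex_class phi) == (c, A)]|
  = k.-1 ^ #|~: A|.
Proof.
pose F (o : option V) : pred 'I_k :=
  fun j => if o is Some v then (j == c) == (v \in A) else j == c.
have -> : #|[set phi : {ffun option V -> 'I_k} |
             (phi None, apex_class phi) == (c, A)]| = #|family F|.
  apply: eq_card => phi; rewrite in_set xpair_eqE; apply/andP/familyP.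
  - move=> [/eqP phiN /eqP phiA] [v|]; rewrite -topredE /= /F ?phiN //.
    by rewrite -phiA inE phiN.
  - move=> phiF; have phiN : phi None == c by have := phiF None.
    split=> //; apply/eqP/setP => v; rewrite inE (eqP phiN).
    by have := phiF (Some v); rewrite -topredE /= /F => /eqP.
rewrite card_family foldrE big_map big_enum /= big_option /=.
have -> : #|F None| = 1 by rewrite -(card1 c); apply: eq_card.
rewrite mul1n -prod_nat_const [RHS]big_mkcond /=; apply: eq_bigr => v _.
rewrite inE; case: (boolP (v \in A)) => vA /=.
- by rewrite -(card1 c); apply: eq_card => j; rewrite -!topredE /= /F vA eqb_id.
- rewrite -[k in k.-1]card_ord -(cardC1 c); apply: eq_card => j.
  by rewrite -!topredE /= /F (negbTE vA) eqbF_neg.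
Qed.

Lemma nb_colourings_bullet k :
  nb_colourings (bullet_edges e) k
  = k * \sum_(A : {set V} | independent e A) k.-1 ^ #|~: A|.
Proof.
pose key (phi : {ffun option V -> 'I_k}) := (phi None, apex_class phi).
rewrite /nb_colourings -sum1_card (partition_big key predT) //=.
rewrite (eq_bigr (fun p => if independent e p.2 then k.-1 ^ #|~: p.2| else 0)).
  rewrite -(pair_big predT predT (fun (_ : 'I_k) (A : {set V}) =>
    if independent e A then k.-1 ^ #|~: A| else 0)) /=.
  by rewrite sum_nat_const card_ord -big_mkcond.
move=> [c A] _ /=; rewrite -(card_apex_fibre c A) -sum1_card.
case: ifP => indepA; last first.
  apply: big1 => phi; rewrite inE weak_proper_bulletE.
  by case/andP => indep_phi /eqP [_ phiA]; rewrite -phiA indep_phi in indepA.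
apply: eq_bigl => phi; rewrite !inE weak_proper_bulletE.
by case: eqP => [[_ ->]|]; rewrite ?indepA ?andbF.
Qed.

End BulletColourings.

Local Open Scope ring_scope.

Lemma expf_cardC (F : fieldType) (V : finType) (A : {set V}) (y : F) :
  y != 0 -> y ^+ #|~: A| = y ^+ #|V| * y^-1 ^+ #|A|.
Proof.
move=> y_neq0; have -> : #|~: A| = (#|V| - #|A|)%N by rewrite -(cardsC A) addKn.
by rewrite expfB_cond ?exprVn // (negbTE y_neq0) max_card.
Qed.

Theorem theorem1 (V : finType) (e : rel V)
  (e_sym : symmetric e) (e_irr : irreflexive e) :
  exists P : {poly rat},
    (forall k : nat, P.[k%:R] = (nb_colourings (bullet_edges e) k)%:R) /\
    (forall x : rat, x != 1 ->
       P.[x] = x * (x - 1) ^+ #|V| * indep_poly_eval e (1 / (x - 1))).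
Proof.
exists (\sum_(A : {set V} | independent e A) 'X * ('X - 1) ^+ #|~: A|).
split=> [k | x x_neq1].
- rewrite nb_colourings_bullet natrM natr_sum horner_sum mulr_sumr.
  apply: eq_bigr => A _; rewrite !hornerE natrX.
  by case: k => [|k]; rewrite ?mul0r //= -addn1 natrD addrK.
- rewrite horner_sum /indep_poly_eval mulr_sumr; apply: eq_bigr => A _.
  by rewrite !hornerE -mulrA expf_cardC // subr_eq0.
Qed.
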